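(* For every integer $r\ge2$, $$\log\mathcal C_r\left(\frac14\right)=\left(\frac14\right)^{r-1}\left(-\frac12\log2+(r-1)\sum_{n=1}^\infty\frac{\lambda(2n)}{n(2n+r-1)2^{2n}}\right).$$
   Context: For an integer $r\ge2$ let $P_r(y)=(1-y)\exp\left(y+\frac{y^2}{2}+\cdots+\frac{y^r}{r}\right)$. The multiple cosine function of Kurokawa–Koyama of order $r\ge2$ is $\mathcal C_r(x)=\prod_{n\ge1,\ n\text{ odd}}\left\{P_r\left(\frac{x}{n/2}\right)P_r\left(-\frac{x}{n/2}\right)^{(-1)^{r-1}}\right\}^{(n/2)^{r-1}}$, interpreted as $\mathcal C_r(x)=\exp\Big(\sum_{n\ge1,\,n\text{ odd}}(n/2)^{r-1}\big[\operatorname{Log}P_r(2x/n)+(-1)^{r-1}\operatorname{Log}P_r(-2x/n)\big]\Big)$, where $\operatorname{Log}P_r(y):=\operatorname{Log}(1-y)+y+\frac{y^2}{2}+\cdots+\frac{y^r}{r}$ with $\operatorname{Log}$ the principal branch. The series converges and defines a holomorphic function on $D=\mathbb C\setminus\big((-\infty,-\tfrac12]\cup[\tfrac12,\infty)\big)$, positive on $(-\tfrac12,\tfrac12)$; $\log\mathcal C_r(x)$ denotes the exponent above (the real logarithm for real $|x|<\tfrac12$). $\lambda(s)=\sum_{n=0}^\infty\frac1{(2n+1)^s}$. *)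

From Stdlib Require Import Reals.
From Coquelicot Require Import Coquelicot.
Open Scope R_scope.

(* Log P_r(y) := Log(1-y) + y + y^2/2 + ... + y^r/r, for real y < 1
   (where the principal Log coincides with the real ln). *)
Definition LogP (r : nat) (y : R) : R :=
  ln (1 - y) + sum_f_R0 (fun j => y ^ (S j) / INR (S j)) (pred r).

(* log C_r(x) = sum over odd n = 2k+1 of
   (n/2)^(r-1) [Log P_r(2x/n) + (-1)^(r-1) Log P_r(-2x/n)],
   for real x with |x| < 1/2. *)
Definition logC (r : nat) (x : R) : R :=
  Series (fun k : nat =>
    let n := 2 * INR k + 1 in
    (n / 2) ^ (r - 1) *
      (LogP r (2 * x / n) + (-1) ^ (r - 1) * LogP r (- (2 * x / n)))).

Definition lambda (s : nat) : R :=
  Series (fun m : nat => / (2 * INR m + 1) ^ s).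

From Stdlib Require Import Reals Lra Lia.
From Coquelicot Require Import Coquelicot.
Open Scope R_scope.

(* With x = 1/4 and n = 2k + 1 the argument of P_r is y = 2x/n = 1/(2n), and
   (n/2)^(r-1) = x^(r-1) / y^(r-1).  Since Log P_r(y) = -sum_(j>r) y^j / j, the bracket
   Log P_r(y) + (-1)^(r-1) Log P_r(-y) equals -2 sum_m y^(2m+r-1) / (2m+r-1), and the partial
   fractions 1/(m(2m+r-1)) = (1/m - 2/(2m+r-1))/(r-1) turn its quotient by y^(r-1) into
   (r-1) sum_m y^(2m) / (m(2m+r-1)) + ln (1 - y^2).  Summed over odd n, the logarithms give
   ln prod (1 - 1/(4n^2)) = -(ln 2)/2, which telescopes against partial Wallis products, and
   exchanging the order of summation in the remaining nonnegative double series turns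
   sum_n (1/(2n))^(2m) into lambda(2m)/2^(2m). *)

Lemma is_derive_sum_pow_div (N : nat) (t : R) :
  is_derive (fun t => sum_f_R0 (fun j => t ^ S j / INR (S j)) N) t
    (sum_f_R0 (fun j => t ^ j) N).
Proof.
  assert (Hterm : forall m, is_derive (fun t => t ^ S m / INR (S m)) t (t ^ m)).
  { intro m. assert (Hm : INR (S m) <> 0) by (apply not_0_INR; lia).
    apply (is_derive_ext (fun t => / INR (S m) * t ^ S m)); [intro; apply Rmult_comm |].
    replace (t ^ m) with (/ INR (S m) * (INR (S m) * 1 * t ^ pred (S m)))
      by (simpl pred; field; exact Hm).
    apply is_derive_scal, is_derive_pow. apply (is_derive_id (K := R_AbsRing)). }
  induction N as [|N IH]; [exact (Hterm 0%nat) |].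
  exact (is_derive_plus _ _ _ _ _ IH (Hterm (S N))).
Qed.

Lemma ln_1m_remainder_bound (N : nat) (y : R) : Rabs y < 1 ->
  Rabs (ln (1 - y) + sum_f_R0 (fun j => y ^ S j / INR (S j)) N)
    <= Rabs y ^ S (S N) / (1 - Rabs y).
Proof.
  intro Hy.
  set (f := fun t => ln (1 - t) + sum_f_R0 (fun j => t ^ S j / INR (S j)) N).
  assert (Hf' : forall c, Rabs c < 1 -> derivable_pt_lim f c (c ^ S N / (c - 1))).
  { intros c Hc. apply is_derive_Reals. apply Rabs_lt_between in Hc.
    replace (c ^ S N / (c - 1)) with (-1 / (1 - c) + sum_f_R0 (fun j => c ^ j) N).
    - apply (is_derive_plus (fun t => ln (1 - t))); [| apply is_derive_sum_pow_div].
      auto_derive; [lra | field; lra].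
    - pose proof (GP_finite c N) as HG. rewrite Nat.add_1_r in HG.
      apply (Rmult_eq_reg_r (c - 1)); [| lra].
      unfold Rdiv. rewrite Rmult_plus_distr_r, HG. field. lra. }
  assert (Hbetween : forall c, Rmin 0 y <= c <= Rmax 0 y -> Rabs c <= Rabs y).
  { intros c Hc. rewrite Rmin_comm, Rmax_comm in Hc.
    apply Rabs_le_between_min_max in Hc. rewrite !Rminus_0_r in Hc. exact Hc. }
  destruct (MVT_abs f (fun c => c ^ S N / (c - 1)) 0 y) as [c [Hmvt Hc]].
  { intros c Hc. apply Hf'. apply Hbetween in Hc. lra. }
  apply Hbetween in Hc.
  assert (Hf0 : f 0 = 0).
  { unfold f. rewrite Rminus_0_r, ln_1, Rplus_0_l.
    apply sum_eq_R0. intros j _. simpl. unfold Rdiv. ring. }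
  replace (ln (1 - y) + _) with (f y - f 0) by (rewrite Hf0; unfold f; ring).
  rewrite Hmvt, Rminus_0_r, Rabs_div, <- RPow_abs by (apply Rabs_le_between in Hc; lra).
  assert (Hden : 1 - Rabs y <= Rabs (c - 1)).
  { rewrite Rabs_minus_sym. pose proof (Rabs_triang_inv 1 c). rewrite Rabs_R1 in *. lra. }
  assert (Hpow : Rabs c ^ S N <= Rabs y ^ S N) by (apply pow_incr; split; [apply Rabs_pos | lra]).
  assert (0 <= Rabs c ^ S N) by (apply pow_le, Rabs_pos).
  assert (Hq : Rabs c ^ S N / Rabs (c - 1) <= Rabs y ^ S N / (1 - Rabs y)).
  { unfold Rdiv. apply Rmult_le_compat; try lra.
    - left. apply Rinv_0_lt_compat. lra.
    - apply Rinv_le_contravar; lra. }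
  replace (Rabs y ^ S (S N) / (1 - Rabs y)) with (Rabs y ^ S N / (1 - Rabs y) * Rabs y)
    by (simpl; field; lra).
  apply Rmult_le_compat_r; [apply Rabs_pos | exact Hq].
Qed.

Lemma is_series_ln_1m (y : R) : Rabs y < 1 ->
  is_series (fun j => y ^ S j / INR (S j)) (- ln (1 - y)).
Proof.
  intro Hy.
  set (eps := fun N : nat => Rabs y ^ S (S N) / (1 - Rabs y)).
  assert (Heps : is_lim_seq eps 0).
  { apply (is_lim_seq_ext (fun N => Rabs y ^ 2 / (1 - Rabs y) * Rabs y ^ N)).
    { intro N. unfold eps. simpl. field. lra. }
    replace (Finite 0) with (Rbar_mult (Rabs y ^ 2 / (1 - Rabs y)) 0) by (simpl; f_equal; ring).
    apply is_lim_seq_scal_l, is_lim_seq_geom. rewrite Rabs_Rabsolu. exact Hy. }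
  change (is_lim_seq (sum_n (fun j => y ^ S j / INR (S j))) (- ln (1 - y))).
  apply (is_lim_seq_le_le (fun N => - ln (1 - y) - eps N) _ (fun N => - ln (1 - y) + eps N)).
  - intro N. rewrite sum_n_Reals.
    pose proof (ln_1m_remainder_bound N y Hy) as HN. apply Rabs_le_between in HN.
    unfold eps. lra.
  - replace (Finite (- ln (1 - y))) with (Rbar_minus (- ln (1 - y)) 0) by (simpl; f_equal; ring).
    apply is_lim_seq_minus'; [apply is_lim_seq_const | exact Heps].
  - replace (Finite (- ln (1 - y))) with (Rbar_plus (- ln (1 - y)) 0) by (simpl; f_equal; ring).
    apply is_lim_seq_plus'; [apply is_lim_seq_const | exact Heps].
Qed.

Lemma is_series_even (w : nat -> R) (l : R) :
  (forall p, w (S (2 * p)) = 0) -> is_series w l -> is_series (fun p => w (2 * p)%nat) l.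
Proof.
  intros Hodd Hw.
  assert (Hsum : forall P, sum_n (fun p => w (2 * p)%nat) P = sum_n w (2 * P)).
  { induction P as [|P IH]; [reflexivity |].
    rewrite sum_Sn, IH. replace (2 * S P)%nat with (S (S (2 * P))) by lia.
    rewrite (sum_Sn w (S (2 * P))), (sum_Sn w (2 * P)), Hodd.
    unfold plus; simpl. ring. }
  change (is_lim_seq (sum_n (fun p => w (2 * p)%nat)) l).
  apply (is_lim_seq_ext (fun P => sum_n w (2 * P))); [intro; symmetry; apply Hsum |].
  apply (is_lim_seq_subseq (sum_n w) l (fun P => (2 * P)%nat)); [| exact Hw].
  intros P [N HN]. exists N. intros n Hn. apply HN. lia.
Qed.

Lemma is_series_sum_n (b : nat -> nat -> R) (l : nat -> R) (K : nat) :
  (forall i, is_series (b i) (l i)) ->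
  is_series (fun p => sum_n (fun i => b i p) K) (sum_n l K).
Proof.
  intro Hb. induction K as [|K IH].
  - rewrite sum_O. apply (is_series_ext (b 0%nat)); [intro; now rewrite sum_O | apply Hb].
  - rewrite sum_Sn.
    apply (is_series_ext (fun p => plus (sum_n (fun i => b i p) K) (b (S K) p)));
      [intro; now rewrite sum_Sn |].
    apply (@is_series_plus R_AbsRing R_NormedModule); [exact IH | apply Hb].
Qed.

Section NonnegSeries.

Variable b : nat -> R.
Hypothesis b_ge0 : forall n, 0 <= b n.

Lemma sum_n_nonneg (N : nat) : 0 <= sum_n b N.
Proof. rewrite sum_n_Reals. now apply cond_pos_sum. Qed.

Lemma le_sum_n (N : nat) : b N <= sum_n b N.
Proof.
  destruct N as [|N]; [rewrite sum_O; lra |].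
  rewrite sum_Sn. pose proof (sum_n_nonneg N). unfold plus; simpl. lra.
Qed.

Lemma sum_n_le_is_series (l : R) : is_series b l -> forall N, sum_n b N <= l.
Proof.
  intro Hl. apply (is_lim_seq_incr_compare _ _ Hl).
  intro n. rewrite sum_Sn. pose proof (b_ge0 (S n)). unfold plus; simpl. lra.
Qed.

Lemma is_series_nonneg (l : R) : is_series b l -> 0 <= l.
Proof.
  intro Hl. pose proof (sum_n_nonneg 0). pose proof (sum_n_le_is_series l Hl 0). lra.
Qed.

End NonnegSeries.

Lemma is_series_swap_nonneg (a : nat -> nat -> R) (G : nat -> R) (L : R) :
  (forall k p, 0 <= a k p) -> (forall k, is_series (a k) (G k)) -> is_series G L ->
  is_series (fun p => Series (fun k => a k p)) L.
Proof.
  intros Ha HG HL.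
  set (H := fun p => Series (fun k => a k p)).
  assert (HH : forall p, is_series (fun k => a k p) (H p)).
  { intro p. apply Series_correct.
    apply (@ex_series_le R_AbsRing R_CompleteNormedModule _ G); [| exists L; exact HL].
    intro k. change (Rabs (a k p) <= G k). rewrite Rabs_pos_eq by apply Ha.
    apply Rle_trans with (sum_n (a k) p); [apply le_sum_n | apply sum_n_le_is_series]; auto. }
  assert (H_ge0 : forall p, 0 <= H p) by (intro p; apply (is_series_nonneg _ (fun k => Ha k p)), HH).
  assert (Hup : forall P, sum_n H P <= L).
  { intro P. pose proof (is_series_sum_n (fun p k => a k p) H P HH) as HP.
    rewrite <- (is_series_unique _ _ HP), <- (is_series_unique _ _ HL).
    apply Series_le; [| exists L; exact HL]. intro k.
    split; [apply sum_n_nonneg | apply sum_n_le_is_series]; auto. }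
  destruct (growing_cv (sum_n H)) as [l Hl].
  { intro n. rewrite sum_Sn. pose proof (H_ge0 (S n)). unfold plus; simpl. lra. }
  { exists L. intros x [n ->]. apply Hup. }
  apply is_lim_seq_Reals in Hl. change (is_series H l) in Hl.
  assert (Hlow : forall K, sum_n G K <= l).
  { intro K. pose proof (is_series_sum_n a G K HG) as HK.
    rewrite <- (is_series_unique _ _ HK), <- (is_series_unique _ _ Hl).
    apply Series_le; [| exists l; exact Hl]. intro p.
    split; [apply sum_n_nonneg | apply (sum_n_le_is_series (fun k => a k p))]; auto. }
  assert (L <= l) by exact (is_lim_seq_le _ _ L l Hlow HL (is_lim_seq_const l)).
  assert (l <= L) by exact (is_lim_seq_le _ _ l L Hup Hl (is_lim_seq_const L)).
  replace L with l by lra. exact Hl.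
Qed.

Definition LogP_sym (r : nat) (y : R) : R := LogP r y + (-1) ^ (r - 1) * LogP r (- y).

Lemma is_series_LogP_tail (r : nat) (y : R) : (0 < r)%nat -> Rabs y < 1 ->
  is_series (fun k => y ^ S (r + k) / INR (S (r + k))) (- LogP r y).
Proof.
  intros Hr Hy.
  apply (is_series_incr_n (fun j => y ^ S j / INR (S j))); [exact Hr |].
  replace (plus (- LogP r y) _) with (- ln (1 - y))
    by (unfold LogP, plus; simpl; rewrite sum_n_Reals; ring).
  now apply is_series_ln_1m.
Qed.

(* Since (-y)^j = (-1)^j y^j, the two tails cancel in the terms with j = r mod 2 and
   double in the others. *)
Lemma is_series_LogP_sym_tail (r : nat) (y : R) : (0 < r)%nat -> Rabs y < 1 ->
  is_series (fun p => y ^ S (r + 2 * p) / INR (S (r + 2 * p))) (- LogP_sym r y / 2).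
Proof.
  intros Hr Hy.
  set (u := fun j => y ^ S j / INR (S j)).
  assert (Hu := is_series_LogP_tail r y Hr Hy).
  assert (Hv := is_series_LogP_tail r (- y) Hr ltac:(now rewrite Rabs_Ropp)).
  assert (Hw := is_series_plus _ _ _ _ Hu (is_series_scal ((-1) ^ (r - 1)) _ _ Hv)).
  set (w := fun k => plus _ _) in Hw.
  assert (Hwk : forall k, w k = u (r + k)%nat * (1 + (-1) ^ k)).
  { intro k.
    assert (Hsign : (-1) ^ (r - 1) * (-1) ^ S (r + k) = (-1) ^ k).
    { rewrite <- pow_add. replace (r - 1 + S (r + k))%nat with (2 * r + k)%nat by lia.
      rewrite pow_add, pow_mult. replace ((-1) ^ 2) with 1 by ring. rewrite pow1. ring. }
    change (u (r + k)%nat + (-1) ^ (r - 1) * ((- y) ^ S (r + k) / INR (S (r + k)))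
      = u (r + k)%nat * (1 + (-1) ^ k)).
    replace (- y) with (-1 * y) by ring. rewrite Rpow_mult_distr, <- Hsign.
    unfold u, Rdiv. ring. }
  apply is_series_even in Hw.
  2:{ intro p. change (w (S (2 * p)) = 0). rewrite Hwk. rewrite <- Nat.add_1_r, pow_add, pow_mult.
      replace ((-1) ^ 2) with 1 by ring. rewrite pow1. simpl. ring. }
  apply (is_series_scal (/ 2)) in Hw.
  replace (- LogP_sym r y / 2)
    with (scal (/ 2) (plus (- LogP r y) (scal ((-1) ^ (r - 1)) (- LogP r (- y)))))
    by (unfold LogP_sym, scal, plus; simpl; unfold mult; simpl; field).
  refine (is_series_ext _ _ _ _ Hw). intro p.
  change (/ 2 * w (2 * p)%nat = u (r + 2 * p)%nat). rewrite Hwk, pow_mult.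
  replace ((-1) ^ 2) with 1 by ring. rewrite pow1. field.
Qed.

Lemma is_series_ln_1m_sq (y : R) : Rabs y < 1 ->
  is_series (fun p => (y ^ 2) ^ S p / INR (S p)) (- ln (1 - y ^ 2)).
Proof.
  intro Hy. apply is_series_ln_1m. rewrite <- RPow_abs.
  apply pow_lt_1_compat; [split; [apply Rabs_pos | exact Hy] | lia].
Qed.

Definition kernel_term (r : nat) (y : R) (p : nat) : R :=
  y ^ (2 * S p) / (INR (S p) * (2 * INR (S p) + INR r - 1)).

Lemma kernel_term_bounds (r : nat) (y : R) (p : nat) :
  0 <= kernel_term r y p <= (y ^ 2) ^ S p / INR (S p).
Proof.
  unfold kernel_term. rewrite pow_mult.
  assert (0 <= (y ^ 2) ^ S p) by (apply pow_le, pow2_ge_0).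
  assert (0 <= INR p) by apply pos_INR. assert (0 <= INR r) by apply pos_INR.
  rewrite !S_INR. unfold Rdiv.
  assert (Hden : 0 < (INR p + 1) * (2 * (INR p + 1) + INR r - 1))
    by (apply Rmult_lt_0_compat; lra).
  split.
  - apply Rmult_le_pos; [lra |]. left. apply Rinv_0_lt_compat, Hden.
  - apply Rmult_le_compat_l; [lra |]. apply Rinv_le_contravar; [lra |].
    rewrite <- (Rmult_1_r (INR p + 1)) at 1. apply Rmult_le_compat_l; lra.
Qed.

Lemma Series_kernel_term_le (r : nat) (y : R) : Rabs y < 1 ->
  Series (kernel_term r y) <= - ln (1 - y ^ 2).
Proof.
  intro Hy.
  assert (Hb := is_series_ln_1m_sq y Hy).
  rewrite <- (is_series_unique _ _ Hb).
  apply Series_le; [apply kernel_term_bounds | exists (- ln (1 - y ^ 2)); exact Hb].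
Qed.

Lemma is_series_kernel_term (r : nat) (y : R) : (2 <= r)%nat -> y <> 0 -> Rabs y < 1 ->
  is_series (kernel_term r y)
    ((- ln (1 - y ^ 2) + LogP_sym r y / y ^ (r - 1)) / INR (r - 1)).
Proof.
  intros Hr Hy0 Hy.
  assert (Hb := is_series_ln_1m_sq y Hy).
  assert (Hc := is_series_LogP_sym_tail r y ltac:(lia) Hy).
  assert (H := is_series_scal (/ INR (r - 1)) _ _
      (is_series_minus _ _ _ _ Hb (is_series_scal (2 / y ^ (r - 1)) _ _ Hc))).
  assert (Hpow : y ^ (r - 1) <> 0) by (apply pow_nonzero; exact Hy0).
  assert (Hr1 : INR (r - 1) = INR r - 1) by (rewrite minus_INR by lia; reflexivity).
  assert (1 < INR r) by (apply lt_1_INR; lia).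
  replace ((- ln (1 - y ^ 2) + LogP_sym r y / y ^ (r - 1)) / INR (r - 1)) with
    (scal (/ INR (r - 1)) (minus (- ln (1 - y ^ 2)) (scal (2 / y ^ (r - 1)) (- LogP_sym r y / 2))))
    by (unfold scal, minus, plus, opp; simpl; unfold mult; simpl; field; lra).
  refine (is_series_ext _ _ _ _ H). intro p.
  change (/ INR (r - 1) * ((y ^ 2) ^ S p / INR (S p)
      - 2 / y ^ (r - 1) * (y ^ S (r + 2 * p) / INR (S (r + 2 * p)))) = kernel_term r y p).
  unfold kernel_term. rewrite <- pow_mult.
  replace (S (r + 2 * p)) with (r - 1 + 2 * S p)%nat by lia. rewrite pow_add.
  rewrite plus_INR, mult_INR, Hr1, !S_INR. simpl (INR 0).
  assert (0 <= INR p) by apply pos_INR.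
  (* [field] must see the powers with symbolic exponents as atoms. *)
  set (a := y ^ (2 * S p)). set (b := y ^ (r - 1)) in *.
  field. repeat split; lra.
Qed.

Definition half_inv_odd (k : nat) : R := / (2 * (2 * INR k + 1)).

Lemma half_inv_odd_bounds (k : nat) : 0 < half_inv_odd k <= / 2.
Proof.
  unfold half_inv_odd. assert (0 <= INR k) by apply pos_INR. split.
  - apply Rinv_0_lt_compat. lra.
  - apply Rinv_le_contravar; lra.
Qed.

(* [wallis_factor n = (2n + 3)^2 / (4 (n + 1) (n + 2))], the reciprocal of a factor of
   Wallis' product. *)
Definition wallis_factor (n : nat) : R := 1 + / (4 * INR (S n) * INR (S (S n))).

Fixpoint wallis_ln (n : nat) : R :=
  match n with
  | O => 0
  | S n => wallis_ln n + ln (wallis_factor n)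
  end.

Lemma ln_wallis_step (M : nat) :
  2 * ln (1 - half_inv_odd (S M) ^ 2) + ln (wallis_factor M)
  = ln (wallis_factor (S (2 * M))) + ln (wallis_factor (S (S (2 * M)))).
Proof.
  assert (Hpos : forall n, 0 < wallis_factor n).
  { intro n. unfold wallis_factor.
    assert (0 < / (4 * INR (S n) * INR (S (S n)))); [| lra].
    apply Rinv_0_lt_compat. rewrite !S_INR. pose proof (pos_INR n). nra. }
  assert (Hy := half_inv_odd_bounds (S M)).
  assert (Hy2 : 0 < 1 - half_inv_odd (S M) ^ 2) by nra.
  replace (2 * ln (1 - half_inv_odd (S M) ^ 2))
    with (ln (1 - half_inv_odd (S M) ^ 2) + ln (1 - half_inv_odd (S M) ^ 2)) by ring.
  rewrite <- !ln_mult by first [apply Hpos | apply Rmult_lt_0_compat; auto | auto].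
  apply f_equal. unfold half_inv_odd, wallis_factor. rewrite !S_INR, mult_INR.
  pose proof (pos_INR M). simpl (INR 2).
  field. repeat split; nra.
Qed.

Lemma wallis_ln_telescope (M : nat) :
  2 * sum_n (fun k => ln (1 - half_inv_odd k ^ 2)) M
  = wallis_ln (S (2 * M)) - wallis_ln M - ln 2.
Proof.
  induction M as [|M IH].
  - rewrite sum_O. simpl wallis_ln. unfold half_inv_odd, wallis_factor. simpl INR.
    replace (1 - (/ (2 * (2 * 0 + 1))) ^ 2) with (3 / 4) by field.
    replace (1 + / (4 * 1 * (1 + 1))) with (3 / 4 * (3 / 4) * 2) by field.
    rewrite !ln_mult by lra. ring.
  - rewrite sum_Sn. replace (2 * S M)%nat with (S (S (2 * M))) by lia.
    cbn [wallis_ln] in IH |- *. pose proof (ln_wallis_step M).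
    change (plus ?a ?b) with (Rplus a b). lra.
Qed.

Lemma wallis_ln_increment_bounds (n d : nat) :
  0 <= wallis_ln (n + d) - wallis_ln n <= / (4 * INR (S n)) - / (4 * INR (S (n + d))).
Proof.
  induction d as [|d IH].
  - rewrite Nat.add_0_r. lra.
  - rewrite Nat.add_succ_r. cbn [wallis_ln]. unfold wallis_factor.
    set (c := / (4 * INR (S (n + d)) * INR (S (S (n + d))))).
    assert (Hc : 0 < c) by (apply Rinv_0_lt_compat; rewrite !S_INR; pose proof (pos_INR (n + d)); nra).
    assert (Hln : 0 <= ln (1 + c) <= c).
    { split.
      - rewrite <- ln_1. left. apply ln_increasing; lra.
      - left. rewrite <- (ln_exp c) at 2. apply ln_increasing; [lra | apply exp_ineq1; lra]. }
    assert (Htel : / (4 * INR (S (S (n + d)))) = / (4 * INR (S (n + d))) - c).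
    { unfold c. rewrite !S_INR. pose proof (pos_INR (n + d)). field. lra. }
    rewrite Htel. lra.
Qed.

Lemma is_series_ln_1m_half_inv_odd_sq :
  is_series (fun k => ln (1 - half_inv_odd k ^ 2)) (- ln 2 / 2).
Proof.
  change (is_lim_seq (sum_n (fun k => ln (1 - half_inv_odd k ^ 2))) (- ln 2 / 2)).
  apply (is_lim_seq_le_le (fun _ => - ln 2 / 2) _ (fun M => - ln 2 / 2 + / (8 * INR (S M)))).
  - intro M. pose proof (wallis_ln_telescope M).
    pose proof (wallis_ln_increment_bounds M (S M)) as HM.
    replace (M + S M)%nat with (S (2 * M)) in HM by lia.
    replace (INR (S (S (2 * M)))) with (2 * INR (S M)) in HM
      by (rewrite !S_INR, mult_INR; simpl; ring).
    assert (0 < INR (S M)) by (apply lt_0_INR; lia).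
    replace (/ (4 * INR (S M)) - / (4 * (2 * INR (S M)))) with (/ (8 * INR (S M))) in HM
      by (field; lra).
    lra.
  - apply is_lim_seq_const.
  - replace (Finite (- ln 2 / 2)) with (Rbar_plus (- ln 2 / 2) 0) by (simpl; f_equal; ring).
    apply is_lim_seq_plus'; [apply is_lim_seq_const |].
    apply (is_lim_seq_ext (fun M => / 8 * / INR (S M))); [intro; now rewrite Rinv_mult |].
    replace (Finite 0) with (Rbar_mult (/ 8) (Rbar_inv p_infty)) by (simpl; f_equal; ring).
    apply is_lim_seq_scal_l, is_lim_seq_inv; [| discriminate].
    apply (is_lim_seq_incr_1 INR), is_lim_seq_INR.
Qed.

Lemma scaled_LogP_sym (r : nat) (x y : R) : (2 <= r)%nat -> y <> 0 -> Rabs y < 1 ->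
  (x / y) ^ (r - 1) * LogP_sym r y
  = x ^ (r - 1) * (INR (r - 1) * Series (kernel_term r y) + ln (1 - y ^ 2)).
Proof.
  intros Hr Hy0 Hy.
  rewrite (is_series_unique _ _ (is_series_kernel_term r y Hr Hy0 Hy)).
  assert (INR (r - 1) <> 0) by (apply not_0_INR; lia).
  assert (y ^ (r - 1) <> 0) by (apply pow_nonzero; exact Hy0).
  unfold Rdiv. rewrite Rpow_mult_distr, pow_inv. field. split; assumption.
Qed.

Lemma logC_quarter_term (r k : nat) : (2 <= r)%nat ->
  (let n := 2 * INR k + 1 in
   (n / 2) ^ (r - 1) *
     (LogP r (2 * (1 / 4) / n) + (-1) ^ (r - 1) * LogP r (- (2 * (1 / 4) / n))))
  = (1 / 4) ^ (r - 1) *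
      (INR (r - 1) * Series (kernel_term r (half_inv_odd k)) + ln (1 - half_inv_odd k ^ 2)).
Proof.
  intro Hr. cbv zeta. pose proof (pos_INR k). pose proof (half_inv_odd_bounds k).
  replace (2 * (1 / 4) / (2 * INR k + 1)) with (half_inv_odd k)
    by (unfold half_inv_odd; field; lra).
  replace ((2 * INR k + 1) / 2) with (1 / 4 / half_inv_odd k)
    by (unfold half_inv_odd; field; lra).
  apply scaled_LogP_sym; [exact Hr | lra | rewrite Rabs_pos_eq; lra].
Qed.

Lemma Series_kernel_term_half_inv_odd (r p : nat) :
  Series (fun k => kernel_term r (half_inv_odd k) p)
  = lambda (2 * S p) / (INR (S p) * (2 * INR (S p) + INR r - 1) * 2 ^ (2 * S p)).
Proof.
  unfold lambda, Rdiv at 1. rewrite <- Series_scal_r. apply Series_ext. intro k.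
  unfold kernel_term, half_inv_odd.
  pose proof (pos_INR k). pose proof (pos_INR r).
  rewrite pow_inv, Rpow_mult_distr, !S_INR.
  assert (2 ^ (2 * S p) <> 0) by (apply pow_nonzero; lra).
  assert ((2 * INR k + 1) ^ (2 * S p) <> 0) by (apply pow_nonzero; lra).
  pose proof (pos_INR p).
  field. repeat split; try assumption; nra.
Qed.

Lemma is_series_Series_kernel_term_half_inv_odd (r : nat) : (2 <= r)%nat ->
  is_series (fun k => Series (kernel_term r (half_inv_odd k)))
    (Series (fun p => lambda (2 * S p) /
       (INR (S p) * (2 * INR (S p) + INR r - 1) * 2 ^ (2 * S p)))).
Proof.
  intro Hr.
  set (G := fun k => Series (kernel_term r (half_inv_odd k))).
  assert (Hy : forall k, half_inv_odd k <> 0 /\ Rabs (half_inv_odd k) < 1).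
  { intro k. pose proof (half_inv_odd_bounds k). rewrite Rabs_pos_eq; lra. }
  assert (HG : forall k, is_series (kernel_term r (half_inv_odd k)) (G k)).
  { intro k. destruct (Hy k) as [Hy0 Hy1].
    apply Series_correct. eexists. exact (is_series_kernel_term r _ Hr Hy0 Hy1). }
  assert (HexG : ex_series G).
  { apply (@ex_series_le R_AbsRing R_CompleteNormedModule _ (fun k => - ln (1 - half_inv_odd k ^ 2))).
    - intro k. change (Rabs (G k) <= - ln (1 - half_inv_odd k ^ 2)).
      rewrite Rabs_pos_eq.
      + apply Series_kernel_term_le, Hy.
      + apply (is_series_nonneg (kernel_term r (half_inv_odd k))); [| apply HG].
        intro p. apply kernel_term_bounds.
    - exists (- (- ln 2 / 2)). apply (is_series_opp (V := R_NormedModule)).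
      exact is_series_ln_1m_half_inv_odd_sq. }
  pose proof (is_series_swap_nonneg (fun k => kernel_term r (half_inv_odd k)) G (Series G)
    (fun k p => proj1 (kernel_term_bounds r _ p)) HG (Series_correct _ HexG)) as Hswap.
  rewrite (is_series_unique _ _ (is_series_ext _ _ _ (Series_kernel_term_half_inv_odd r) Hswap)).
  exact (Series_correct _ HexG).
Qed.

Theorem corollary2p9 (r : nat) (hr : (2 <= r)%nat) :
  logC r (1 / 4) =
  (1 / 4) ^ (r - 1) *
    (- (1 / 2) * ln 2 +
     INR (r - 1) *
       Series (fun k : nat =>
         let n := S k in
         lambda (2 * n) /
           (INR n * (2 * INR n + INR r - 1) * 2 ^ (2 * n)))).
Proof.
  unfold logC.
  rewrite (Series_ext _ (fun k => (1 / 4) ^ (r - 1) * (INR (r - 1) *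
      Series (kernel_term r (half_inv_odd k)) + ln (1 - half_inv_odd k ^ 2))))
    by (intro k; exact (logC_quarter_term r k hr)).
  apply is_series_unique.
  rewrite (Rplus_comm (- (1 / 2) * ln 2)).
  replace (- (1 / 2) * ln 2) with (- ln 2 / 2) by field.
  apply (@is_series_scal_l R_AbsRing R_NormedModule).
  apply (@is_series_plus R_AbsRing R_NormedModule).
  - apply (@is_series_scal_l R_AbsRing R_NormedModule).
    exact (is_series_Series_kernel_term_half_inv_odd r hr).
  - exact is_series_ln_1m_half_inv_odd_sq.
Qed.
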